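(* Let $I\subseteq R$ be an $\mathfrak m$-primary monomial ideal with $\mu_i=x_i^{d_i}\in G(I)$ for $i=1,\dots,n$. Assume that every minimal generator $x_1^{\alpha_1}\cdots x_n^{\alpha_n}\in G(I)$ which is not a corner satisfies $\frac{\alpha_1}{d_1}+\cdots+\frac{\alpha_n}{d_n}\ge \frac n2$. Then $I$ is good.
   Context: Let $\mathbb K$ be a field, $R=\mathbb K[x_1,\dots,x_n]$, $\mathfrak m=\langle x_1,\dots,x_n\rangle$, $\mathbb N=\{0,1,2,\dots\}$. A monomial $x_1^{\alpha_1}\cdots x_n^{\alpha_n}$ is identified with the point $(\alpha_1,\dots,\alpha_n)\in\mathbb N^n$. For a monomial ideal $I$, $G(I)$ denotes its (unique) minimal monomial generating set. If $I$ is an $\mathfrak m$-primary monomial ideal, then for each $i$ there is a unique $d_i\ge1$ with $x_i^{d_i}\in G(I)$; write $\mu_i=x_i^{d_i}$. A corner is a monomial whose exponent vector is $(k_1d_1,\dots,k_nd_n)$ with all $k_i\in\mathbb N$. For $(a_1,\dots,a_n)\in\mathbb N^n$ the box associated to $I$ is $B_{a_1,\dots,a_n}=([a_1d_1,(a_1+1)d_1]\times\cdots\times[a_nd_n,(a_n+1)d_n])\cap\mathbb N^n$; a monomial belongs to a box if its exponent vector does. $I$ is called good if for every integer $l\ge1$, every element of $G(I^l)$ belongs to some box $B_{a_1,\dots,a_n}$ with $a_1+\dots+a_n=l-1$; otherwise $I$ is called bad. *)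

(* Monomials of K[x_1..x_n] are identified with exponent
   vectors 'I_n -> nat; a monomial ideal is identified with the (up-closed)
   set of monomials it contains. *)
From mathcomp Require Import all_boot all_order all_algebra.
Set Implicit Arguments. Unset Strict Implicit. Unset Printing Implicit Defensive.
Import Order.TTheory GRing.Theory Num.Theory.

Definition expv (n : nat) := 'I_n -> nat.

Definition mdiv n (a b : expv n) : Prop := forall i, a i <= b i.

Definition mmul n (a b : expv n) : expv n := fun i => a i + b i.

Definition xpow n (i : 'I_n) (k : nat) : expv n := fun j => if j == i then k else 0.

Definition mone n : expv n := fun _ => 0.

Definition is_monomial_ideal n (I : expv n -> Prop) : Prop :=
  forall a b, I a -> mdiv a b -> I b.

Definition mingen n (I : expv n -> Prop) (a : expv n) : Prop :=
  I a /\ forall b, I b -> mdiv b a -> mdiv a b.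

Fixpoint ideal_pow n (I : expv n -> Prop) (l : nat) : expv n -> Prop :=
  match l with
  | 0 => fun _ => True
  | l'.+1 => fun a => exists b c, I b /\ ideal_pow I l' c /\ mdiv (mmul b c) a
  end.

(* m-primary: I contained in m (1 not in I) and contains a power of each x_i *)
Definition m_primary n (I : expv n -> Prop) : Prop :=
  ~ I (@mone n) /\ forall i : 'I_n, exists k, I (xpow i k).

Definition corner n (d : 'I_n -> nat) (a : expv n) : Prop :=
  forall i, exists k, a i = k * d i.

Definition in_box n (d : 'I_n -> nat) (c : 'I_n -> nat) (a : expv n) : Prop :=
  forall i, c i * d i <= a i <= (c i).+1 * d i.

Definition good n (d : 'I_n -> nat) (I : expv n -> Prop) : Prop :=
  forall l, 1 <= l -> forall a, mingen (ideal_pow I l) a ->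
    exists c : 'I_n -> nat, (\sum_(i < n) c i = l.-1)%N /\ in_box d c a.

From mathcomp Require Import all_boot all_order all_algebra.
Import Order.TTheory GRing.Theory Num.Theory.
From mathcomp Require Import zify lra.
From Stdlib Require Import Classical.

Set Implicit Arguments.
Unset Strict Implicit.
Unset Printing Implicit Defensive.

(* A monomial a lies in a box B_c with c_1 + ... + c_n = l - 1 iff
   \sum_i (ceil(a_i/d_i) - 1) <= l - 1 <= \sum_i floor(a_i/d_i); c is then
   chosen coordinatewise between these bounds. For a minimal generator a of
   I^l the left inequality holds in any monomial ideal containing the mu_i:
   otherwise a product of l pure powers mu_i would strictly divide a. For the
   right one, a is a multiple of a product of l minimal generators of I. Each
   corner generator contributes a whole d_k to some coordinate; the q
   non-corner ones add up to a monomial b with \sum_i b_i/d_i >= q n/2, and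
   n >= 2. Rounding down loses less than n, so
   q <= \sum_i floor(b_i/d_i) + 1. *)

Lemma sum_pred1_nat n (i : 'I_n) : \sum_(j < n) (j == i) = 1.
Proof. by rewrite (bigD1 i) //= eqxx big1 => // j /negbTE ->. Qed.

Lemma exists_bounded_sum n (lo hi : 'I_n -> nat) (L : nat) :
  (forall i, lo i <= hi i) -> \sum_(i < n) lo i <= L <= \sum_(i < n) hi i ->
  exists2 c : 'I_n -> nat, forall i, lo i <= c i <= hi i & \sum_(i < n) c i = L.
Proof.
move=> lo_hi /andP[lo_L]; rewrite -(subnKC lo_L); elim: (L - _) => [|k IHk] Lk.
  by exists lo => [i|]; rewrite ?addn0 ?leqnn ?lo_hi.
rewrite addnS in Lk; have [c c_bounds c_sum] := IHk (ltnW Lk).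
have [i c_lt_hi] : exists i, c i < hi i.
  apply/existsP; apply: contraTT Lk => /existsPn c_hi.
  by rewrite -leqNgt -c_sum; apply: leq_sum => i _; rewrite leqNgt c_hi.
exists (fun j => c j + (j == i)) => [j|].
  by have /andP[] := c_bounds j; case: eqVneq => [->|_]; lia.
by rewrite big_split /= c_sum sum_pred1_nat addn1 addnS.
Qed.

Lemma box_coordE (d a c : nat) : 0 < d ->
  (c * d <= a <= c.+1 * d) = ((a.-1) %/ d <= c <= a %/ d).
Proof.
move=> d_gt0; rewrite andbC leq_divRL //; congr (_ && _).
by case: a => [|a] /=; rewrite ?div0n // -ltn_divLR.
Qed.

Definition mdeg n (d : 'I_n -> nat) (a : expv n) : rat :=
  (\sum_(i < n) (a i)%:R / (d i)%:R)%R.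

Lemma mdeg_lt_sum_divn n (d : 'I_n -> nat) (a : expv n) :
  0 < n -> (forall i, 0 < d i) -> (mdeg d a < (\sum_(i < n) a i %/ d i + n)%N%:R)%R.
Proof.
move=> n_gt0 d_gt0; rewrite natrD natr_sum -[n in (n%:R)%R]card_ord -sumr_const.
rewrite -big_split /=; apply: ltr_sum => [|i _].
  by apply/hasP; exists (Ordinal n_gt0); rewrite ?mem_index_enum.
by rewrite ltr_pdivrMr ?ltr0n // natr1 -natrM ltr_nat ltn_ceil.
Qed.

Lemma mdegD n (d : 'I_n -> nat) (a b : expv n) :
  mdeg d (mmul a b) = (mdeg d a + mdeg d b)%R.
Proof.
by rewrite /mdeg -big_split; apply: eq_bigr => i _; rewrite /mmul natrD mulrDl.
Qed.

Section MonomialIdeal.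

Variables (n : nat) (I : expv n -> Prop).

Lemma mingen_mdiv_eq a g : I a -> mingen I g -> mdiv a g -> a =1 g.
Proof.
by move=> Ia [_ g_min] a_g i; apply/eqP; rewrite eqn_leq a_g (g_min a Ia a_g).
Qed.

Lemma exists_mingen_mdiv a : I a -> exists2 g, mingen I g & mdiv g a.
Proof.
move Na : (\sum_(i < n) a i) => N; elim/ltn_ind: N a Na => N IHN a Na Ia.
have [a_min | a_nmin] := classic (mingen I a); first by exists a.
have [b [Ib b_a a_nb]] : exists b, [/\ I b, mdiv b a & ~ mdiv a b].
  apply: NNPP => no_b; apply: a_nmin; split=> // b Ib b_a.
  by apply: NNPP => a_nb; apply: no_b; exists b.
have [i b_lt_a] : exists i, b i < a i.
  apply: NNPP => no_i; apply: a_nb => i; rewrite leqNgt.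
  by apply/negP => ?; apply: no_i; exists i.
have [|g g_min g_b] := IHN (\sum_(j < n) b j) _ b erefl Ib.
  rewrite -Na (bigD1 i) //= [X in _ < X](bigD1 i) //= -addSn.
  by rewrite leq_add // leq_sum.
by exists g => // j; apply: leq_trans (g_b j) (b_a j).
Qed.

Hypothesis I_ideal : is_monomial_ideal I.
Hypothesis I_proper : ~ I (@mone n).

Lemma xpow_in_ideal_gt0 i k : I (xpow i k) -> 0 < k.
Proof.
move=> Ix; rewrite lt0n; apply/eqP => k0; apply: I_proper.
by apply: I_ideal Ix _ => j; rewrite /xpow k0; case: (j == i).
Qed.

Lemma corner_in_ideal_ge d g : I g -> corner d g -> exists k, d k <= g k.
Proof.
move=> Ig g_corner; apply: NNPP => no_k; apply: I_proper; apply: I_ideal Ig _ => i.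
have [[|m] g_i] := g_corner i; first by rewrite g_i.
by case: no_k; exists i; rewrite g_i mulSn leq_addr.
Qed.

Variable d : 'I_n -> nat.

Lemma ideal_pow_corner l (f : 'I_n -> nat) : (forall i, I (xpow i (d i))) ->
  \sum_(i < n) f i = l -> ideal_pow I l (fun i => f i * d i).
Proof.
move=> xpow_in; elim: l f => [//|l IHl] f f_sum /=.
have : \sum_(j < n) f j != 0 by rewrite f_sum.
rewrite sum_nat_eq0 => /forallPn[i /= f_i_neq0].
pose f' j := f j - (j == i).
have f_eq j : f j = f' j + (j == i).
  by rewrite /f' subnK //; case: eqVneq => [->|]; rewrite ?lt0n.
exists (xpow i (d i)), (fun j => f' j * d j); split; [exact: xpow_in | split].
  apply: IHl; apply: succn_inj; rewrite -f_sum (eq_bigr _ (fun j _ => f_eq j)).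
  by rewrite big_split /= sum_pred1_nat addn1.
move=> j; rewrite /mmul /xpow [in leqRHS]f_eq mulnDl addnC.
by case: eqVneq => [->|]; rewrite ?mul1n ?addn0.
Qed.

Lemma sum_divn_pred_lt l a : (forall i, I (xpow i (d i))) -> 0 < l ->
  mingen (ideal_pow I l) a -> \sum_(i < n) (a i).-1 %/ d i < l.
Proof.
move=> xpow_in l_gt0 [_ a_min]; rewrite ltnNge; apply/negP => l_le.
have [|f f_bounds f_sum] :=
  @exists_bounded_sum n (fun=> 0) (fun i => (a i).-1 %/ d i) l (fun i => leq0n _).
  by rewrite big1_eq l_le.
have f_d_le i : f i * d i <= (a i).-1.
  have /andP[_ f_le] := f_bounds i.
  exact: leq_trans (leq_mul f_le (leqnn _)) (leq_trunc_div _ _).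
have a_le := a_min _ (ideal_pow_corner xpow_in f_sum)
  (fun i => leq_trans (f_d_le i) (leq_pred _)).
have f0 i : f i = 0.
  have a0 : a i = 0 by have := a_le i; have := f_d_le i; lia.
  by have /andP[_] := f_bounds i; rewrite a0 div0n leqn0 => /eqP.
by move: l_gt0; rewrite -f_sum big1.
Qed.

Hypothesis d_mingen : forall i, mingen I (xpow i (d i)).
Hypothesis noncorner_mdeg :
  forall g, mingen I g -> ~ corner d g -> (n%:R / 2%:R <= mdeg d g)%R.

Lemma mingen_noncorner_gt1 g : mingen I g -> ~ corner d g -> 1 < n.
Proof.
move=> g_min g_ncorner; rewrite ltnNge; apply/negP => n_le1.
apply: g_ncorner => i; exists 1; rewrite mul1n.
have ord_eq (j : 'I_n) : j = i.
  by apply: ord_inj; have := ltn_ord i; have := ltn_ord j; lia.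
have xpow_i : xpow i (d i) i = d i by rewrite /xpow eqxx.
case: (leqP (d i) (g i)) => [d_le_g | g_lt_d].
  rewrite -(mingen_mdiv_eq (d_mingen i).1 g_min) // => j.
  by rewrite (ord_eq j) xpow_i.
rewrite (mingen_mdiv_eq g_min.1 (d_mingen i)) // => j.
by rewrite (ord_eq j) xpow_i ltnW.
Qed.

Lemma ideal_pow_decomp l a : ideal_pow I l a ->
  exists (e : 'I_n -> nat) (b : expv n) (q : nat),
    [/\ \sum_(i < n) e i + q = l, 0 < q -> 1 < n,
        (q%:R * (n%:R / 2%:R) <= mdeg d b)%R & forall i, e i * d i + b i <= a i].
Proof.
elim: l a => [|l IHl] a /=.
  move=> _; exists (fun=> 0), (fun=> 0), 0; split=> //; first by rewrite big1_eq.
  by rewrite mul0r; apply: sumr_ge0 => i _; rewrite divr_ge0.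
move=> [g [c [Ig [c_pow gc_a]]]].
have [e [b [q [e_sum q_gt0 q_mdeg ebc]]]] := IHl c c_pow.
have [h h_min h_g] := exists_mingen_mdiv Ig.
have ebh_a i : e i * d i + b i + h i <= a i.
  by have := ebc i; have := h_g i; have := gc_a i; rewrite /mmul; lia.
have [h_corner | h_ncorner] := classic (corner d h).
  have [k d_le_h] := corner_in_ideal_ge h_min.1 h_corner.
  exists (fun j => e j + (j == k)), b, q; split=> //.
    by rewrite big_split /= sum_pred1_nat addnAC addn1 e_sum.
  move=> j; have := ebh_a j; rewrite mulnDl.
  by case: eqVneq => [->|_]; rewrite ?mul1n ?mul0n; lia.
exists e, (mmul b h), q.+1; split=> [||//|j].
- by rewrite addnS e_sum.
- by move=> _; apply: mingen_noncorner_gt1 h_min h_ncorner.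
- by rewrite mdegD -addn1 natrD mulrDl mul1r lerD // noncorner_mdeg.
- by rewrite /mmul addnA ebh_a.
Qed.

Lemma ideal_pow_le_sum_divn l a : ideal_pow I l a ->
  l <= (\sum_(i < n) a i %/ d i).+1.
Proof.
move=> a_pow; have [e [b [q [<- q_gt0 q_mdeg ebc]]]] := ideal_pow_decomp a_pow.
have d_gt0 i : 0 < d i := xpow_in_ideal_gt0 (d_mingen i).1.
set F := \sum_(i < n) b i %/ d i.
have eF_le : \sum_(i < n) e i + F <= \sum_(i < n) a i %/ d i.
  rewrite -big_split leq_sum // => i _ /=.
  by rewrite -(divnMDl _ _ (d_gt0 i)) leq_div2r.
suff : q <= F.+1 by lia.
case: q q_gt0 q_mdeg => [//|q] /(_ isT) n_gt1 q_mdeg.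
have mdeg_lt := mdeg_lt_sum_divn b (ltnW n_gt1) d_gt0.
have : ((q.+1 * n)%:R < (2 * (F + n))%:R :> rat)%R.
  by rewrite !natrM natrD; rewrite mulrA in q_mdeg; lra.
by rewrite ltr_nat; nia.
Qed.

End MonomialIdeal.

Theorem mainTheorem3 (n : nat) (I : expv n -> Prop) (d : 'I_n -> nat) :
  is_monomial_ideal I ->
  m_primary I ->
  (forall i : 'I_n, mingen I (xpow i (d i))) ->
  (forall a : expv n, mingen I a -> ~ corner d a ->
     (n%:R / 2%:R <= \sum_(i < n) ((a i)%:R / (d i)%:R) :> rat)%R) ->
  good d I.
Proof.
move=> I_ideal [I_proper _] d_mingen noncorner_mdeg l l_gt0 a a_min.
have xpow_in i : I (xpow i (d i)) := (d_mingen i).1.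
have d_gt0 i : 0 < d i := xpow_in_ideal_gt0 I_ideal I_proper (xpow_in i).
have lo_le_hi i : (a i).-1 %/ d i <= a i %/ d i := leq_div2r _ (leq_pred _).
have lo_le_hi_sum : \sum_(i < n) (a i).-1 %/ d i <= l.-1 <= \sum_(i < n) a i %/ d i.
  rewrite -ltnS prednK // (sum_divn_pred_lt xpow_in l_gt0 a_min) /= -ltnS prednK //.
  exact: (ideal_pow_le_sum_divn I_ideal I_proper d_mingen noncorner_mdeg a_min.1).
have [c c_bounds c_sum] := exists_bounded_sum lo_le_hi lo_le_hi_sum.
by exists c; split=> // i; rewrite box_coordE.
Qed.
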